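(* Let $\mathcal{J}=\langle U,g,f\rangle$ satisfy the standing assumptions below, and let $(\theta^k)_{k\ge1}$ be a sequence of evaluations satisfying the long-term condition. Then for all $T_0\geq0$ and all $y_0\in\mathbb{R}^d$, $$\limsup_k V_{\theta^k}(y_0)=\limsup_k\inf_{t\leq T_0}V_{\mathcal{T}_t\sharp\theta^k}(y_0).$$ In particular, for all $T_0\ge0$ and $y_0\in\mathbb{R}^d$, $\limsup_k V_{\theta^k}(y_0)\leq\sup_{k\in\mathbb{N}^*}\inf_{t\leq T_0}V_{\mathcal{T}_t\sharp\theta^k}(y_0)$.
   Context: Setting: $U$ is a metric space, $g:\mathbb{R}^d\times U\to[0,1]$ is Borel measurable, $f:\mathbb{R}^d\times U\to\mathbb{R}^d$ is Borel measurable with $\|f(y,u)-f(\bar y,u)\|\leq L\|y-\bar y\|$ and $\|f(y,u)\|\leq a(1+\|y\|)$ for constants $L\ge0,a>0$. $\mathcal{U}$ is the set of measurable controls $u:[0,+\infty)\to U$; $y(t,u,y_0)$ is the solution of $y'=f(y,u)$, $y(0)=y_0$. For an evaluation $\theta\in\Delta(\mathbb{R}_+)$, $V_\theta(y_0)=\inf_{u\in\mathcal{U}}\int_{[0,+\infty)} g(y(s,u,y_0),u(s))\,d\theta(s)$ and $V_{\mathcal{T}_t\sharp\theta}(y_0)=\inf_{u\in\mathcal{U}}\int_{[0,+\infty)} g(y(s+t,u,y_0),u(s+t))\,d\theta(s)$ ($t$ ranging over $[0,T_0]$). $TV_s(\theta)=\sup_{Q\in\mathcal{B}(\mathbb{R}_+)}|\theta(Q)-\theta(Q+s)|$;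 $(\theta^k)$ satisfies the long-term condition if $\sup_{0\le s\le S}TV_s(\theta^k)\to0$ as $k\to\infty$ for every $S>0$. *)

From HB Require Import structures.
From mathcomp Require Import all_boot all_order all_algebra.
From mathcomp Require Import all_classical all_reals all_analysis.
Set Implicit Arguments. Unset Strict Implicit. Unset Printing Implicit Defensive.
Import Order.TTheory GRing.Theory Num.Theory.
Import numFieldNormedType.Exports.
Local Open Scope classical_set_scope.
Local Open Scope ring_scope.

Definition borel_set {T : topologicalType} (A : set T) : Prop :=
  smallest (sigma_algebra setT) open A.

Definition Rplus {R : realType} : set R := [set x | 0 <= x].

Definition borel_measurable {X Y : topologicalType} (h : X -> Y) : Prop :=
  forall B : set Y, borel_set B -> borel_set (h @^-1` B).

(* Measurable controls u : [0,+oo) -> U (values on negative times are irrelevant):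
   Borel measurable on [0,+oo). *)
Definition is_control {R : realType} {U : topologicalType} (u : R -> U) : Prop :=
  forall B : set U, borel_set B -> measurable (Rplus `&` u @^-1` B).

(* y is the (Caratheodory) solution of y' = f(y,u), y(0) = y0 on [0,+oo):
   y(t) = y0 + int_0^t f(y(s),u(s)) ds componentwise, with integrable integrand. *)
Definition is_solution {R : realType} {U : Type} {d : nat}
  (f : 'rV[R]_d -> U -> 'rV[R]_d) (u : R -> U) (y0 : 'rV[R]_d) (y : R -> 'rV[R]_d)
  : Prop :=
  forall t : R, 0 <= t -> forall i : 'I_d,
    (@lebesgue_measure R).-integrable [set s : R | (0 <= s <= t)%R]
       (fun s => (f (y s) (u s) ord0 i)%:E) /\
    (y t ord0 i)%:E = (y0 ord0 i)%:E +
       (\int[@lebesgue_measure R]_(s in [set s : R | (0 <= s <= t)%R])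
           (f (y s) (u s) ord0 i)%:E)%E.

Definition V_eval {R : realType} {U : topologicalType} {d : nat}
  (g : 'rV[R]_d -> U -> R) (f : 'rV[R]_d -> U -> 'rV[R]_d)
  (theta : probability R R) (y0 : 'rV[R]_d) : \bar R :=
  ereal_inf [set r | exists (u : R -> U) (y : R -> 'rV[R]_d),
     is_control u /\ is_solution f u y0 y /\
     r = (\int[theta]_(s in Rplus) (g (y s) (u s))%:E)%E].

(* V_{T_t # theta}(y0) = inf_u int g(y(s+t,u,y0),u(s+t)) dtheta(s) *)
Definition V_shift {R : realType} {U : topologicalType} {d : nat}
  (g : 'rV[R]_d -> U -> R) (f : 'rV[R]_d -> U -> 'rV[R]_d)
  (theta : probability R R) (t : R) (y0 : 'rV[R]_d) : \bar R :=
  ereal_inf [set r | exists (u : R -> U) (y : R -> 'rV[R]_d),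
     is_control u /\ is_solution f u y0 y /\
     r = (\int[theta]_(s in Rplus) (g (y (s + t)) (u (s + t)))%:E)%E].

Definition TV {R : realType} (theta : probability R R) (s : R) : \bar R :=
  ereal_sup [set `|(theta Q - theta [set (x + s)%R | x in Q])%E|%E
             | Q in [set Q : set R | measurable Q /\ Q `<=` Rplus]].

Definition long_term {R : realType} (theta : nat -> probability R R) : Prop :=
  forall S : R, 0 < S ->
    (fun k => ereal_sup [set TV (theta k) s | s in [set s | 0 <= s <= S]])
      @ \oo --> 0%E.

From HB Require Import structures.
From mathcomp Require Import all_boot all_order all_algebra.
From mathcomp Require Import all_classical all_reals all_analysis.
From mathcomp Require Import measurable_realfun lra zify.
Import Order.TTheory GRing.Theory Num.Theory.
Import numFieldNormedType.Exports HBNNSimple.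
Local Open Scope classical_set_scope.
Local Open Scope ring_scope.

(** Write [C'] for [[set s | 0 <= s /\ C (s + t)]]. For a measurable
  [C] included in [R_+], [C] is the disjoint union of its part below [t], of
  mass at most [theta R_+ - theta (R_+ + t) <= TV_t], and of [C' + t], of mass
  at most [theta C' + TV_t]; hence [theta C <= theta C' + 2 TV_t]. Slicing a
  [[0,1]]-valued integrand into its superlevel sets transfers this to
  integrals: [int h dtheta <= int h(. + t) dtheta + 2 TV_t]. Consequently
  [V_theta <= V_(T_t # theta) + 2 TV_t] for every [t <= T0], while
  [V_(T_0 # theta) = V_theta] bounds the infimum over [t] from above; the
  long-term condition makes the error [2 sup_(t <= T0) TV_t] vanish in the
  limsup. *)

Section shift.
Context {R : realType}.
Implicit Types (s t : R) (C Q : set R).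

Lemma measurable_preimage_shift s {Q} : measurable Q ->
  measurable ((fun x => x + s) @^-1` Q).
Proof.
move=> mQ; rewrite -[X in measurable X]setTI.
exact: (measurable_funD (@measurable_id _ _ setT) (measurable_cst s)) measurableT Q mQ.
Qed.

Lemma image_shift s Q : [set x + s | x in Q] = (fun x => x - s) @^-1` Q.
Proof.
apply/seteqP; split => [_ [x Qx <-]|x Qx] /=; first by rewrite addrK.
by exists (x - s) => //; rewrite subrK.
Qed.

Lemma measurable_image_shift s {Q} : measurable Q ->
  measurable [set x + s | x in Q].
Proof. by move=> mQ; rewrite image_shift; exact: measurable_preimage_shift. Qed.

Lemma measurable_Rplus : measurable (@Rplus R).
Proof. by rewrite /Rplus -set_itvcy; exact: measurable_itv. Qed.

Definition shift_preimage t C := [set s | 0 <= s /\ C (s + t)].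

Lemma measurable_shift_preimage t {C} : measurable C ->
  measurable (shift_preimage t C).
Proof.
move=> mC; have -> : shift_preimage t C = Rplus `&` (fun x => x + t) @^-1` C by [].
apply: measurableI; first exact: measurable_Rplus.
exact: measurable_preimage_shift.
Qed.

Lemma shift_preimage_sub_Rplus t C : shift_preimage t C `<=` Rplus.
Proof. by move=> x []. Qed.

Lemma image_shift_preimage t C :
  [set x + t | x in shift_preimage t C] = C `&` `[t, +oo[.
Proof.
apply/seteqP; split => [_ [x [x0 Cx] <-]|x [Cx]].
  by split => //; rewrite /= in_itv /= andbT lerDr.
rewrite /= in_itv /= andbT => tx; exists (x - t); last by rewrite subrK.
by split; [rewrite subr_ge0|rewrite subrK].
Qed.

Lemma shift_preimage_Rplus {t} : 0 <= t -> shift_preimage t Rplus = Rplus.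
Proof.
move=> t0; apply/seteqP; split => [x [] //|x x0].
by split => //; rewrite /Rplus /= addr_ge0.
Qed.

End shift.

Section total_variation.
Context {R : realType} (th : probability R R).
Local Open Scope ereal_scope.
Implicit Types (s t : R) (C Q : set R).

Lemma TV_ge s {Q} : measurable Q -> Q `<=` Rplus ->
  `|th Q - th [set (x + s)%R | x in Q]| <= TV th s.
Proof. by move=> mQ QR; apply: ereal_sup_ubound; exists Q. Qed.

Lemma TV_ge0 s : 0 <= TV th s.
Proof.
have := TV_ge s measurable0 (sub0set Rplus).
by rewrite image_set0 measure0 subee // abse0.
Qed.

Lemma TV_le1 s : TV th s <= 1.
Proof.
apply: ge_ereal_sup => _ [Q [mQ _] <-].
set Qs := [set (x + s)%R | x in Q].
have mQs : measurable Qs := measurable_image_shift s mQ.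
have Q1 : th Q <= 1 := probability_le1 th mQ.
have Qs1 : th Qs <= 1 := probability_le1 th mQs.
have Q0 : 0 <= th Q := measure_ge0 th Q.
have Qs0 : 0 <= th Qs := measure_ge0 th Qs.
move: Q1 Qs1 Q0 Qs0.
rewrite -(fineK (fin_num_measure th _ mQ)) -(fineK (fin_num_measure th _ mQs)).
rewrite -EFinB abse_EFin !lee_fin => Q1 Qs1 Q0 Qs0.
by rewrite ler_norml; apply/andP; split; lra.
Qed.

Lemma TV_fin_num s : TV th s \is a fin_num.
Proof. by rewrite ge0_fin_numE ?TV_ge0 // (le_lt_trans (TV_le1 s)) ?ltey. Qed.

Lemma measure_image_shift_le s {Q} : measurable Q -> Q `<=` Rplus ->
  th [set (x + s)%R | x in Q] <= th Q + TV th s.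
Proof.
move=> mQ QR; apply: le_trans (leeD2l _ (TV_ge s mQ QR)).
have mQs := measurable_image_shift s mQ.
rewrite -(fineK (fin_num_measure th _ mQ)) -(fineK (fin_num_measure th _ mQs)).
rewrite -EFinB abse_EFin -EFinD lee_fin distrC -lerBlDl.
exact: ler_norm.
Qed.

Lemma measure_initial_segment_le t : (0 <= t)%R ->
  th (Rplus `\` `[t, +oo[) <= TV th t.
Proof.
move=> t0; have mI : measurable (`[t, +oo[ : set R) by exact: measurable_itv.
have RtE : Rplus `&` `[t, +oo[ = [set (x + t)%R | x in Rplus].
  by rewrite -{2}(shift_preimage_Rplus t0) image_shift_preimage.
have thR : th Rplus < +oo.
  exact: le_lt_trans (probability_le1 th measurable_Rplus) (ltey _).
rewrite (measureD measurable_Rplus mI thR) RtE.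
exact: le_trans (lee_abs _) (TV_ge t measurable_Rplus (@subset_refl _ _)).
Qed.

Lemma measure_le_shift_preimage {t C} : (0 <= t)%R -> measurable C ->
  C `<=` Rplus -> th C <= th (shift_preimage t C) + (TV th t + TV th t).
Proof.
move=> t0 mC CR; have mI : measurable (`[t, +oo[ : set R) by exact: measurable_itv.
have head : th (C `\` `[t, +oo[) <= TV th t.
  apply: le_trans (measure_initial_segment_le t t0).
  by apply: le_measure; rewrite ?inE; [exact: measurableD|
    exact: measurableD measurable_Rplus mI|exact: setSD].
have tail := measure_image_shift_le t (measurable_shift_preimage t mC)
  (shift_preimage_sub_Rplus t C).
rewrite (measureDI th mC mI) -image_shift_preimage addeCA.
exact: leeD.
Qed.

Lemma fine_measure_le_shift_preimage {t C} : (0 <= t)%R -> measurable C ->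
  C `<=` Rplus -> (fine (th C) <=
    fine (th (shift_preimage t C)) + (fine (TV th t) + fine (TV th t)))%R.
Proof.
move=> t0 mC CR; have := measure_le_shift_preimage t0 mC CR.
rewrite -(fineK (fin_num_measure th _ mC)).
rewrite -(fineK (fin_num_measure th _ (measurable_shift_preimage t mC))).
by rewrite -(fineK (TV_fin_num t)) -!EFinD lee_fin.
Qed.

End total_variation.

Section level_sum.
Context {R : realType}.

Lemma sum_nat_lt m N : \sum_(k < N) ((k < m)%N%:R : R) = (minn m N)%:R.
Proof.
elim: N => [|N IH]; first by rewrite big_ord0 minn0.
by rewrite big_ord_recr /= IH -natrD; congr (_%:R); case: (ltnP N m) => /=; lia.
Qed.

Definition level_sum (N : nat) (v : R) : R :=
  \sum_(k < N) N%:R^-1 * ((k.+1%:R / N%:R <= v)%R)%:R.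

Lemma level_sumE N v : (0 < N)%N -> 0 <= v <= 1 ->
  level_sum N v = N%:R^-1 * (Num.truncn (N%:R * v))%:R.
Proof.
move=> N0 /andP[v0 v1]; rewrite /level_sum -mulr_sumr; congr (_ * _).
have Np : 0 < (N%:R : R) by rewrite ltr0n.
under eq_bigr => k _ do rewrite ler_pdivrMr // mulrC -truncn_gt_nat.
rewrite sum_nat_lt; congr (_%:R); apply/minn_idPl.
rewrite truncn_le_nat; apply: (le_lt_trans (y := N%:R)).
  by rewrite -[leRHS]mulr1 ler_wpM2l // ltW.
by rewrite ltr_nat.
Qed.

Lemma level_sum_le N v : (0 < N)%N -> 0 <= v <= 1 -> level_sum N v <= v.
Proof.
move=> N0 /[dup] v01 /andP[v0 _]; have Np : 0 < (N%:R : R) by rewrite ltr0n.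
have /andP[+ _] := truncn_itv (mulr_ge0 (ltW Np) v0).
by rewrite level_sumE // ler_pdivrMl.
Qed.

Lemma le_level_sum N v : (0 < N)%N -> 0 <= v <= 1 ->
  v <= N%:R^-1 + level_sum N v.
Proof.
move=> N0 /[dup] v01 /andP[v0 _]; have Np : 0 < (N%:R : R) by rewrite ltr0n.
have /andP[_ +] := truncn_itv (mulr_ge0 (ltW Np) v0).
rewrite level_sumE // -[X in X + _]mulr1 -mulrDr ler_pdivlMl // addrC natr1.
exact: ltW.
Qed.

End level_sum.

Section integral_levels.
Context {d} {T : measurableType d} {R : realType} (mu : probability T R).
Local Open Scope ereal_scope.
Implicit Types (D : set T) (phi : T -> R).

Lemma le_ge0_integral D (f1 f2 : T -> \bar R) :
  (forall x, D x -> 0 <= f1 x) -> (forall x, D x -> f1 x <= f2 x) ->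
  \int[mu]_(x in D) f1 x <= \int[mu]_(x in D) f2 x.
Proof.
move=> f10 f12.
have f20 x : D x -> 0 <= f2 x by move=> Dx; exact: le_trans (f10 x Dx) (f12 x Dx).
rewrite (ge0_integralE _ f10) (ge0_integralE _ f20).
apply: ereal_sup_le => _ [h hle <-]; exists h => //= x.
apply: le_trans (hle x) _; rewrite /patch; case: ifP => // /[!inE] Dx.
exact: f12.
Qed.

Lemma measurable_sum_indicator D (c : R) (F : nat -> set T) N :
  (forall k, measurable (F k)) ->
  measurable_fun D (fun x => (\sum_(k < N) c * \1_(F k) x)%R).
Proof.
move=> mF; apply: measurable_sum => k.
by apply: measurable_funM; [exact: measurable_cst|exact: measurable_indic].
Qed.

Lemma integral_sum_indicator D (c : R) (F : nat -> set T) N :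
  measurable D -> (0 <= c)%R -> (forall k, measurable (F k)) ->
  \int[mu]_(x in D) ((\sum_(k < N) c * \1_(F k) x)%R)%:E =
  ((\sum_(k < N) c * fine (mu (F k `&` D)))%R)%:E.
Proof.
move=> mD c0 mF; under eq_integral do rewrite -sumEFin.
rewrite ge0_integral_sum //.
- rewrite -sumEFin; apply: eq_bigr => i _.
  rewrite EFinM (@ge0_integralZl_EFin _ _ _ mu D mD (fun x => (\1_(F i) x)%:E)) //.
    by rewrite integral_indic // fineK // fin_num_measure //; exact: measurableI.
  exact/measurable_EFinP/measurable_indic.
- move=> k; apply/measurable_EFinP.
  by apply: measurable_funM; [exact: measurable_cst|exact: measurable_indic].
- by move=> k x _; rewrite lee_fin mulr_ge0.
Qed.

Definition level_set phi N k := [set x | k.+1%:R / N%:R <= phi x]%R.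

Lemma measurable_level_set phi N k : measurable_fun setT phi ->
  measurable (level_set phi N k).
Proof.
move=> mphi; have -> : level_set phi N k = phi @^-1` `[(k.+1%:R / N%:R)%R, +oo[.
  by apply/seteqP; split => x /=; rewrite in_itv /= andbT.
by rewrite -[X in measurable X]setTI; apply: mphi => //; exact: measurable_itv.
Qed.

Lemma sum_indicator_level_set phi N x :
  (\sum_(k < N) N%:R^-1 * \1_(level_set phi N k) x)%R = level_sum N (phi x).
Proof.
apply: eq_bigr => k _; rewrite indicE; congr (_ * (nat_of_bool _)%:R)%R.
by apply/idP/idP => [/set_mem|/mem_set].
Qed.

Lemma level_sum_le_integral {D phi N} : measurable D -> measurable_fun setT phi ->
  (forall x, D x -> 0 <= phi x <= 1)%R -> (0 < N)%N ->
  ((\sum_(k < N) N%:R^-1 * fine (mu (level_set phi N k `&` D)))%R)%:E <=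
  \int[mu]_(x in D) (phi x)%:E.
Proof.
move=> mD mphi phi01 N0.
rewrite -integral_sum_indicator //; last first.
  by move=> k; exact: measurable_level_set.
apply: le_ge0_integral => x Dx; rewrite lee_fin.
  by apply: sumr_ge0 => k _; rewrite mulr_ge0 // invr_ge0.
by rewrite sum_indicator_level_set level_sum_le // phi01.
Qed.

Lemma integral_le_level_sum {D phi N} : measurable D -> measurable_fun setT phi ->
  (forall x, D x -> 0 <= phi x <= 1)%R -> (0 < N)%N ->
  \int[mu]_(x in D) (phi x)%:E <=
  ((N%:R^-1 + \sum_(k < N) N%:R^-1 * fine (mu (level_set phi N k `&` D)))%R)%:E.
Proof.
move=> mD mphi phi01 N0; have Ni : (0 <= N%:R^-1 :> R)%R by rewrite invr_ge0.
have mL k : measurable (level_set phi N k) by exact: measurable_level_set.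
pose stair x : \bar R := ((\sum_(k < N) N%:R^-1 * \1_(level_set phi N k) x)%R)%:E.
have step : \int[mu]_(x in D) (phi x)%:E <=
    \int[mu]_(x in D) ((N%:R^-1)%:E + stair x).
  apply: le_ge0_integral => x /phi01 /andP[phi0 phi1]; first by rewrite lee_fin.
  by rewrite -EFinD lee_fin sum_indicator_level_set le_level_sum ?phi0.
apply: le_trans step _.
rewrite ge0_integralD //; last 2 first.
- by move=> x _; rewrite lee_fin; apply: sumr_ge0 => k _; rewrite mulr_ge0.
- exact/measurable_EFinP/measurable_sum_indicator.
rewrite integral_cst // integral_sum_indicator // EFinD leeD2r //.
by rewrite -[leRHS]mule1 lee_wpmul2l ?lee_fin // probability_le1.
Qed.

End integral_levels.

Section shift_integral.
Context {R : realType} (th : probability R R).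

Lemma level_set_shift_Rplus (phi : R -> R) (t : R) N k : (0 <= t)%R ->
  level_set (fun x : R => phi (x + t)) N k `&` Rplus =
  shift_preimage t (level_set phi N k `&` Rplus).
Proof.
move=> t0; apply/seteqP; split => [x [Lx x0]|x [x0 [Lx _]]] //.
by split=> //; split=> //; rewrite /Rplus /= addr_ge0.
Qed.

Lemma integral_le_shift_add_TV_level (t : R) (phi : R -> R) N : (0 <= t)%R ->
  measurable_fun setT phi -> (forall x, Rplus x -> 0 <= phi x <= 1)%R ->
  (0 < N)%N ->
  (\int[th]_(x in Rplus) (phi x)%:E <=
   \int[th]_(x in Rplus) (phi (x + t))%:E + (TV th t + TV th t) + (N%:R^-1)%:E)%E.
Proof.
move=> t0 mphi phi01 N0.
have mphit : measurable_fun setT (fun x : R => phi (x + t)).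
  by apply: measurableT_comp => //; apply: measurable_funD.
have phit01 x : Rplus x -> (0 <= phi (x + t) <= 1)%R.
  by move=> x0; apply: phi01; rewrite /Rplus /= addr_ge0.
pose C k := level_set phi N k `&` Rplus.
have mC k : measurable (C k).
  by apply: measurableI; [exact: measurable_level_set|exact: measurable_Rplus].
pose p k := fine (th (C k)).
pose q k := fine (th (shift_preimage t (C k))).
pose tau := fine (TV th t).
have upper : (\int[th]_(x in Rplus) (phi x)%:E <=
    (N%:R^-1 + \sum_(k < N) N%:R^-1 * p k)%:E)%E.
  exact: (integral_le_level_sum th measurable_Rplus mphi phi01 N0).
have lower : ((\sum_(k < N) N%:R^-1 * q k)%:E <=
    \int[th]_(x in Rplus) (phi (x + t))%:E)%E.
  have -> : \sum_(k < N) N%:R^-1 * q k = \sum_(k < N) N%:R^-1 *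
      fine (th (level_set (fun x : R => phi (x + t)) N k `&` Rplus)).
    by apply: eq_bigr => k _; rewrite level_set_shift_Rplus.
  exact: (level_sum_le_integral th measurable_Rplus mphit phit01 N0).
have sum_pq : (\sum_(k < N) N%:R^-1 * p k <=
    \sum_(k < N) N%:R^-1 * q k + (tau + tau))%R.
  apply: (@le_trans _ _ (\sum_(k < N) N%:R^-1 * (q k + (tau + tau)))).
    apply: ler_sum => k _; rewrite ler_wpM2l ?invr_ge0 //.
    exact: (fine_measure_le_shift_preimage th t0 (mC k) (@subIsetr _ _ _)).
  under eq_bigr do rewrite mulrDr.
  rewrite big_split /= sumr_const card_ord -mulrnAr -[(tau + tau) *+ N]mulr_natl.
  by rewrite mulrA mulVf ?mul1r // pnatr_eq0 -lt0n.
rewrite -(fineK (TV_fin_num th t)) -/tau.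
apply: le_trans upper _; apply: le_trans (leeD2r _ (leeD2r _ lower)).
by rewrite -!EFinD lee_fin; lra.
Qed.

Lemma integral_le_shift_add_TV_measurable (t : R) (phi : R -> R) : (0 <= t)%R ->
  measurable_fun setT phi -> (forall x, Rplus x -> 0 <= phi x <= 1)%R ->
  (\int[th]_(x in Rplus) (phi x)%:E <=
   \int[th]_(x in Rplus) (phi (x + t))%:E + (TV th t + TV th t))%E.
Proof.
move=> t0 mphi phi01; apply/lee_addgt0Pr => e e0.
pose N := (Num.truncn e^-1).+1.
apply: le_trans (integral_le_shift_add_TV_level t phi N t0 mphi phi01 _) _ => //.
apply: leeD2l; rewrite lee_fin -[leRHS]invrK lef_pV2 ?posrE ?invr_gt0 ?ltr0n //.
exact/ltW/truncnS_gt.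
Qed.

(* No measurability of [h] is needed: the integral of a nonnegative function
   is the supremum of the integrals of the simple functions below it. *)
Lemma integral_le_shift_add_TV (t : R) (h : R -> R) : (0 <= t)%R ->
  (forall x, Rplus x -> 0 <= h x <= 1)%R ->
  (\int[th]_(x in Rplus) (h x)%:E <=
   \int[th]_(x in Rplus) (h (x + t))%:E + (TV th t + TV th t))%E.
Proof.
move=> t0 h01.
rewrite ge0_integralE; last by move=> x /h01 /andP[h0 _]; rewrite lee_fin.
apply: ge_ereal_sup => _ [phi /= phile <-].
have phi0 x : (0 <= phi x)%R by exact: fun_ge0.
have phi_Rplus x : ~ Rplus x -> phi x = 0%R.
  move=> x0; apply/eqP; rewrite eq_le phi0 andbT.
  by have := phile x; rewrite /patch memNset // lee_fin.
have phih x : Rplus x -> (phi x <= h x)%R.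
  by move=> x0; have := phile x; rewrite /patch mem_set // lee_fin.
have -> : sintegral th phi = (\int[th]_(x in Rplus) (phi x)%:E)%E.
  rewrite integral_mkcond.
  have := integral_nnsfun th measurableT phi; rewrite patch_setT => <-.
  apply: eq_integral => x _; rewrite /patch; case: ifPn => // /negP xR.
  by rewrite phi_Rplus // => /mem_set /xR.
apply: le_trans (integral_le_shift_add_TV_measurable t phi t0 _ _) _.
- exact: measurable_funP.
- move=> x x0; rewrite phi0 /=; apply: le_trans (phih x x0) _.
  by case/andP: (h01 x x0).
apply: leeD2r; apply: le_ge0_integral => x x0; first by rewrite lee_fin.
by rewrite lee_fin phih // /Rplus /= addr_ge0.
Qed.

End shift_integral.

Section TV_sup.
Context {R : realType} (th : probability R R).
Local Open Scope ereal_scope.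

Definition TV_sup (S : R) := ereal_sup [set TV th s | s in [set s | 0 <= s <= S]%R].

Lemma TV_le_sup {S s : R} : (0 <= s <= S)%R -> TV th s <= TV_sup S.
Proof. by move=> sS; apply: ereal_sup_ubound; exists s. Qed.

Lemma TV_sup_fin_num (S : R) : (0 <= S)%R -> TV_sup S \is a fin_num.
Proof.
move=> S0; have S00 : (0 <= (0 : R) <= S)%R by rewrite lexx.
rewrite ge0_fin_numE; last exact: le_trans (TV_ge0 th 0) (TV_le_sup S00).
by apply: le_lt_trans (ltey 1); apply: ge_ereal_sup => _ [s _ <-]; exact: TV_le1.
Qed.

End TV_sup.

Section value_functions.
Context {R : realType} {U : topologicalType} {d : nat}.
Variables (g : 'rV[R]_d -> U -> R) (f : 'rV[R]_d -> U -> 'rV[R]_d).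
Variables (th : probability R R) (y0 : 'rV[R]_d).
Local Open Scope ereal_scope.

Lemma V_shift0 : V_shift g f th 0 y0 = V_eval g f th y0.
Proof.
rewrite /V_shift /V_eval; congr ereal_inf; apply/seteqP.
by split=> r [u [y [cu [sy ->]]]]; exists u, y; do 2 split => //;
  apply: eq_integral => s _; rewrite addr0.
Qed.

Lemma V_eval_le_V_shift (t : R) : (0 <= t)%R ->
  (forall y u, 0 <= g y u <= 1)%R ->
  V_eval g f th y0 <= V_shift g f th t y0 + (TV th t + TV th t).
Proof.
move=> t0 g01; have tfin : TV th t + TV th t \is a fin_num.
  by rewrite fin_numD !TV_fin_num.
rewrite -leeBlDr //; apply: le_ereal_inf_tmp => _ [u [y [cu [sy ->]]]].
rewrite leeBlDr //.
apply: le_trans _ (integral_le_shift_add_TV th t (fun s => g (y s) (u s)) t0 _).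
  by apply: ereal_inf_lbound; exists u, y.
by move=> x _; exact: g01.
Qed.

Definition V_shift_inf (T0 : R) :=
  ereal_inf [set V_shift g f th t y0 | t in [set t | 0 <= t <= T0]%R].

Lemma V_shift_inf_le_V_eval {T0 : R} : (0 <= T0)%R ->
  V_shift_inf T0 <= V_eval g f th y0.
Proof.
move=> T00; rewrite -V_shift0; apply: ereal_inf_lbound.
by exists 0%R => //; rewrite /= lexx.
Qed.

Lemma V_eval_le_V_shift_inf {T0 S : R} : (0 <= T0 <= S)%R ->
  (forall y u, 0 <= g y u <= 1)%R ->
  V_eval g f th y0 <= V_shift_inf T0 + (TV_sup th S + TV_sup th S).
Proof.
move=> /andP[T00 T0S] g01.
have Sfin : TV_sup th S + TV_sup th S \is a fin_num.
  by rewrite fin_numD TV_sup_fin_num // (le_trans T00).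
rewrite -leeBlDr //; apply: le_ereal_inf_tmp => _ [t /andP[t0 tT0] <-].
rewrite leeBlDr //; apply: le_trans (V_eval_le_V_shift t t0 g01) _.
have tS : (0 <= t <= S)%R by rewrite t0 (le_trans tT0).
by apply: leeD2l; apply: leeD; exact: TV_le_sup.
Qed.

End value_functions.

Section limsup.
Context {R : realType}.
Local Open Scope ereal_scope.
Implicit Types u v c : (\bar R)^nat.

Lemma limn_esup_le_add_cvg0 {u v c} : (forall n, u n <= v n + c n) ->
  c @ \oo --> 0 -> limn_esup u <= limn_esup v.
Proof.
move=> uvc c0; rewrite !limn_esup_lim.
have vc : (fun n => esups v n + esups c n) @ \oo --> limn (esups v) + 0.
  by apply: cvgeD; [rewrite fin_num_adde_defl|exact: is_cvg_esups|exact: cvg_esups].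
apply: (@le_trans _ _ (limn (fun n => esups v n + esups c n))).
  apply: lee_lim; [exact: is_cvg_esups|exact: cvgP vc|].
  apply: nearW => n; apply: ge_ereal_sup => _ [m nm <-].
  by apply: le_trans (uvc m) _; apply: leeD; apply: ereal_sup_ubound; exists m.
by rewrite (cvg_lim _ vc) // adde0.
Qed.

Lemma limn_esup_le {u v} : (forall n, u n <= v n) ->
  limn_esup u <= limn_esup v.
Proof.
move=> uv; apply: (limn_esup_le_add_cvg0 (c := cst 0)); last exact: cvg_cst.
by move=> n; rewrite adde0.
Qed.

Lemma limn_esup_le_sup u : limn_esup u <= ereal_sup (range u).
Proof.
rewrite limn_esup_lim; apply: (@le_trans _ _ (esups u 0%N)).
  apply: lime_le; first exact: is_cvg_esups.
  by apply: nearW => n; exact: nonincreasing_esups (leq0n n).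
by apply: ereal_sup_le => _ [k _ <-]; exists k.
Qed.

End limsup.

Theorem mainTheorem12 (R : realType) (d : nat) (U : pseudoMetricType R)
  (hU : hausdorff_space U)
  (g : 'rV[R]_d -> U -> R) (f : 'rV[R]_d -> U -> 'rV[R]_d) (L a : R)
  (hg01 : forall y u, 0 <= g y u <= 1)
  (hgm : borel_measurable (fun p : 'rV[R]_d * U => g p.1 p.2))
  (hfm : borel_measurable (fun p : 'rV[R]_d * U => f p.1 p.2))
  (hL : 0 <= L) (ha : 0 < a)
  (hLip : forall y y' u, `|f y u - f y' u| <= L * `|y - y'|)
  (hgrowth : forall y u, `|f y u| <= a * (1 + `|y|))
  (theta : nat -> probability R R)
  (hsupp : forall k, theta k (~` Rplus) = 0%E)
  (hlt : long_term theta) :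
  forall (T0 : R) (y0 : 'rV[R]_d), 0 <= T0 ->
    limn_esup (fun k => V_eval g f (theta k) y0)
      = limn_esup (fun k => ereal_inf [set V_shift g f (theta k) t y0
                                        | t in [set t : R | (0 <= t <= T0)%R]])
    /\
    (limn_esup (fun k => V_eval g f (theta k) y0)
      <= ereal_sup [set ereal_inf [set V_shift g f (theta k) t y0
                                        | t in [set t : R | (0 <= t <= T0)%R]]
                    | k in [set: nat]])%E.
Proof.
(* [long_term] only controls windows [[0, S]] with [S > 0], and [T0] may be 0. *)
move=> T0 y0 T00; pose S := (T0 + 1)%R.
have T0S : (0 <= T0 <= S)%R by rewrite T00 /S lerDl ler01.
have S0 : 0 < S by rewrite /S ltr_wpDl ?ltr01.
pose c k := (TV_sup (theta k) S + TV_sup (theta k) S)%E.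
have c0 : c @ \oo --> 0%E by rewrite -(adde0 0%E); apply: cvgeD => //; exact: hlt.
have le_V_W := limn_esup_le_add_cvg0
  (fun k => V_eval_le_V_shift_inf g f (theta k) y0 T0S hg01) c0.
have le_W_V := limn_esup_le (fun k => V_shift_inf_le_V_eval g f (theta k) y0 T00).
have E : limn_esup (fun k => V_eval g f (theta k) y0) =
    limn_esup (fun k => V_shift_inf g f (theta k) y0 T0).
  by apply: le_anti; rewrite le_V_W le_W_V.
by split; [exact: E|rewrite E; exact: limn_esup_le_sup].
Qed.
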